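(* Let $\alpha$ be an involution of $Y$ which interchanges $E_1'\leftrightarrow R_3$, $E_2'\leftrightarrow R_1$, $E_3'\leftrightarrow R_2$ and permutes the six $A_2$-configurations $R_{i1}-R_{i2}$ in three orbits. Then the class of $\alpha(C_1')$ in $\mathrm{Pic}(Y)$ is either $C_1'$ or $-R_3-E_1'+3(E_3'+R_2)-C_1'$.
   Context: $Y$ is the minimal resolution of the quotient of the Cartwright–Steger surface $X$ by its automorphism group $\mathrm{Aut}(X)\cong\mathbb{Z}/3$; $Y$ is a simply connected minimal surface of general type with $K_Y^2=2$, $p_g=1$, $\mathrm{rk}\,\mathrm{Pic}(Y)=18$, so numerical and linear equivalence coincide on $Y$. $R_1,R_2,R_3$ are the three $(-3)$-curves of the resolution over the images of the fixed points of type $\frac13(1,1)$, $R_{j1}-R_{j2}$ ($j=1,\dots,6$) the $A_2$-chains of $(-2)$-curves over the images of the fixed points of type $\frac13(1,2)$, and $E_1',E_2',E_3',C_1',\dots,C_4'$ are the proper transforms of the images of certain totally geodesic curves. The $R_{lm}$ are disjoint from $E_i',R_j,C_k'$, and $\mathrm{Pic}(Y)\otimes\mathbb{Q}$ is spanned by $E_1',E_3',R_1,R_2,R_3,C_1'$ and the $R_{ij}$. The intersection matrix in the order $E_1',E_2',E_3',R_1,R_2,R_3,C_1'$ is $$\begin{pmatrix}-3&0&0&3&1&2&2\\0&-3&0&2&1&3&0\\0&0&-3&1&4&1&1\\3&2&1&-3&0&0&0\\1&1&4&0&-3&0&1\\2&3&1&0&0&-3&2\\2&0&1&0&1&2&-2\end{pmatrix}.$$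 $K_Y\equiv E_3'+R_2$ and $E_1'+E_2'+R_1+R_3\equiv 2E_3'+2R_2$. *)

From HB Require Import structures.
From mathcomp Require Import all_boot all_order all_algebra.
Set Implicit Arguments. Unset Strict Implicit. Unset Printing Implicit Defensive.
Import Order.TTheory GRing.Theory Num.Theory.
Local Open Scope ring_scope.

(* Intersection matrix in the order E1', E2', E3', R1, R2, R3, C1'. *)
Definition cs_rows : seq (seq int) :=
  [:: [:: -3; 0; 0; 3; 1; 2; 2];
      [:: 0; -3; 0; 2; 1; 3; 0];
      [:: 0; 0; -3; 1; 4; 1; 1];
      [:: 3; 2; 1; -3; 0; 0; 0];
      [:: 1; 1; 4; 0; -3; 0; 1];
      [:: 2; 3; 1; 0; 0; -3; 2];
      [:: 2; 0; 1; 0; 1; 2; -2]].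

Definition cs_mat : 'M[int]_7 :=
  \matrix_(i < 7, j < 7) nth 0 (nth [::] cs_rows i) j.

(* Intersection numbers of the six A_2 chains R_{i1} - R_{i2}
   (indices i : 'I_6, k : 'I_2). *)
Definition A2_int (i : 'I_6) (k : 'I_2) (j : 'I_6) (l : 'I_2) : int :=
  if i == j then (if k == l then -2 else 1) else 0.

From HB Require Import structures.
From mathcomp Require Import all_boot all_order all_algebra zify.

Set Implicit Arguments.
Unset Strict Implicit.
Unset Printing Implicit Defensive.
Import Order.TTheory GRing.Theory Num.Theory.
Local Open Scope ring_scope.

(* The classes E1', E3', R1, R2, R3 and the A2-chains span a sublattice W of
   corank one in Pic(Y) (x) Q, so its orthogonal complement is the line through
   w = -R3 - E1' + 3(E3' + R2) - 2C1'.  Because C1' meets E1', E2', E3' exactly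
   as it meets R3, R1, R2, and alpha swaps these curves and permutes the
   chains, v = alpha(C1') - C1' is orthogonal to W, hence a rational multiple
   of w.  Since alpha is an isometry, (C1' + v)^2 = C1'^2, and as
   w^2 = -2 (w . C1') this forces v = 0 or v = w. *)

Section SymmetricForm.

Variables (V : zmodType) (b : V -> V -> int).
Hypothesis b_addl : forall x y z, b (x + y) z = b x z + b y z.
Hypothesis b_sym : forall x y, b x y = b y x.

Lemma b0l y : b 0 y = 0.
Proof. by have := b_addl 0 0 y; rewrite addr0; lia. Qed.

Lemma bNl x y : b (- x) y = - b x y.
Proof. by apply/eqP; rewrite -addr_eq0 -b_addl addNr b0l. Qed.

Lemma bBl x z y : b (x - z) y = b x y - b z y.
Proof. by rewrite b_addl bNl. Qed.

Lemma bMnl x y n : b (x *+ n) y = b x y * n%:Z.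
Proof.
elim: n => [|n IHn]; first by rewrite mulr0n b0l mulr0.
by rewrite mulrS b_addl IHn intS mulrDr mulr1 addrC.
Qed.

Lemma bMzl x y m : b (x *~ m) y = b x y * m.
Proof.
case: m => n; first by rewrite -pmulrn bMnl.
by rewrite NegzE mulrNz bNl -pmulrn bMnl mulrN.
Qed.

Lemma b_addr x y z : b x (y + z) = b x y + b x z.
Proof. by rewrite !(b_sym x) b_addl. Qed.

Lemma bMzr x y m : b x (y *~ m) = b x y * m.
Proof. by rewrite b_sym bMzl b_sym. Qed.

Lemma b_sumr x (I : Type) (r : seq I) (P : pred I) (F : I -> V) :
  b x (\sum_(i <- r | P i) F i) = \sum_(i <- r | P i) b x (F i).
Proof.
apply: (big_morph (b x)) => [y z|]; first exact: b_addr.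
by rewrite b_sym b0l.
Qed.

Lemma bMnr_eq0 x y n : (0 < n)%N -> b x (y *+ n) = 0 -> b x y = 0.
Proof.
rewrite b_sym bMnl b_sym => n_gt0 /eqP.
by rewrite mulf_eq0 eqz_nat (gtn_eqF n_gt0) orbF => /eqP.
Qed.

Definition orthogonal_to (W : V -> Prop) z := forall g, W g -> b z g = 0.

Section RankOneComplement.

Variables (W : V -> Prop) (c w : V).
Hypothesis orthogonal_eq0 : forall z, orthogonal_to W z -> b z c = 0 -> z = 0.
Hypothesis w_perp : orthogonal_to W w.
Hypothesis bwc_neq0 : b w c != 0.
Hypothesis bww : b w w = - 2 * b w c.

Lemma orthogonal_mulz_eq0 z m : orthogonal_to W z -> m != 0 -> z *~ m = 0 -> z = 0.
Proof.
move=> z_perp m_neq0 zm0; apply: orthogonal_eq0 => //.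
have /eqP := bMzl z c m; rewrite zm0 b0l eq_sym mulf_eq0 (negbTE m_neq0) orbF.
by move/eqP.
Qed.

Lemma orthogonal_colinear v : orthogonal_to W v -> v *~ b w c = w *~ b v c.
Proof.
move=> v_perp; apply/eqP; rewrite -subr_eq0; apply/eqP.
apply: orthogonal_eq0 => [g Wg|]; last by rewrite bBl !bMzl mulrC subrr.
by rewrite bBl !bMzl (v_perp _ Wg) (w_perp Wg) !mul0r subrr.
Qed.

Lemma orthogonal_isometric_shift v :
  orthogonal_to W v -> b (c + v) (c + v) = b c c -> v = 0 \/ v = w.
Proof.
move=> v_perp norm_cv; set a := b w c; set s := b v c.
have vv : b v v = - 2 * s.
  move: norm_cv; rewrite b_addl !b_addr (b_sym c v) -/s; lia.
have : b (v *~ a) (v *~ a) = b (w *~ s) (w *~ s) by rewrite orthogonal_colinear.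
rewrite !bMzl !bMzr vv bww -/a => quad.
have /eqP : a * (s * (s - a)) = 0 by nia.
rewrite mulf_eq0 (negbTE bwc_neq0) /= mulf_eq0 subr_eq0 => /orP[] /eqP s_val.
- left; apply: (orthogonal_mulz_eq0 v_perp bwc_neq0).
  by rewrite orthogonal_colinear // -/s s_val mulr0z.
- right; apply/eqP; rewrite -subr_eq0; apply/eqP.
  apply: (orthogonal_mulz_eq0 _ bwc_neq0).
    by move=> g Wg; rewrite bBl (v_perp _ Wg) (w_perp Wg) subrr.
  by rewrite mulrzBl orthogonal_colinear // -/s s_val subrr.
Qed.

End RankOneComplement.

Hypothesis b_nondeg : forall x, (forall y, b x y = 0) -> x = 0.

Lemma orthogonal_generators_eq0 (E1 E3 R1 R2 R3 C1 : V) (R : 'I_6 -> 'I_2 -> V) :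
  (forall y : V, exists (n : nat) (c : 'I_6 -> int) (d : 'I_6 -> 'I_2 -> int),
      (0 < n)%N /\
      y *+ n = E1 *~ c 0 + E3 *~ c 1 + R1 *~ c 2 + R2 *~ c 3 + R3 *~ c 4
               + C1 *~ c 5 + \sum_(i < 6) \sum_(k < 2) R i k *~ d i k) ->
  forall z, (forall g, g \in [:: C1; E1; E3; R1; R2; R3] -> b z g = 0) ->
    (forall i k, b z (R i k) = 0) -> z = 0.
Proof.
move=> span z z_gens z_R; apply: b_nondeg => y.
have [n [c [d [n_gt0 ey]]]] := span y.
apply: (bMnr_eq0 n_gt0); rewrite ey.
rewrite !b_addr !bMzr b_sumr big1 => [|i _]; last first.
  by rewrite b_sumr big1 // => k _; rewrite bMzr z_R mul0r.
by rewrite !z_gens ?inE ?eqxx ?orbT // !mul0r !addr0.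
Qed.

End SymmetricForm.

Lemma perm_eq_pair_preimage (T : eqType) (f : T -> T) (x y : 'I_2 -> T) :
  perm_eq [:: f (x 0); f (x 1)] [:: y 0; y 1] -> forall k, exists l, y k = f (x l).
Proof.
move=> /perm_mem fx_y k.
have k01 : k = 0 \/ k = 1 by case: k => -[|[|//]] k_lt; [left | right]; apply: val_inj.
have : y k \in [:: y 0; y 1] by case: k01 => ->; rewrite !inE eqxx ?orbT.
by rewrite -fx_y !inE => /orP[] /eqP ->; [exists 0 | exists 1].
Qed.

Lemma ord7_all (P : 'I_7 -> Prop) : (forall i, P i) ->
  P (@Ordinal 7 0 isT) /\ P (@Ordinal 7 1 isT) /\ P (@Ordinal 7 2 isT) /\
  P (@Ordinal 7 3 isT) /\ P (@Ordinal 7 4 isT) /\ P (@Ordinal 7 5 isT) /\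
  P (@Ordinal 7 6 isT).
Proof. by move=> allP; do !split. Qed.

Theorem lemma5p2
  (* Pic(Y), with the intersection form *)
  (V : zmodType) (b : V -> V -> int)
  (b_addl : forall x y z, b (x + y) z = b x z + b y z)
  (b_sym : forall x y, b x y = b y x)
  (* numerical and linear equivalence coincide *)
  (b_nondeg : forall x, (forall y, b x y = 0) -> x = 0)
  (E1 E2 E3 R1 R2 R3 C1 : V) (R : 'I_6 -> 'I_2 -> V)
  (hmat : forall i j : 'I_7,
      b (tnth [tuple E1; E2; E3; R1; R2; R3; C1] i)
        (tnth [tuple E1; E2; E3; R1; R2; R3; C1] j) = cs_mat i j)
  (hA2 : forall i k j l, b (R i k) (R j l) = A2_int i k j l)
  (hdisj : forall i k, forall X, X \in [:: E1; E2; E3; R1; R2; R3; C1] ->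
      b (R i k) X = 0)
  (hrel : E1 + E2 + R1 + R3 = (E3 + R2) *+ 2)
  (* Pic(Y) (x) Q is spanned by E1', E3', R1, R2, R3, C1' and the R_ij *)
  (hspan : forall x : V, exists (n : nat) (c : 'I_6 -> int) (d : 'I_6 -> 'I_2 -> int),
      (0 < n)%N /\
      x *+ n = E1 *~ c 0 + E3 *~ c 1 + R1 *~ c 2 + R2 *~ c 3 + R3 *~ c 4
               + C1 *~ c 5 + \sum_(i < 6) \sum_(k < 2) R i k *~ d i k)
  (* alpha : the action of the involution on Pic(Y) *)
  (alpha : V -> V)
  (alpha_add : forall x y, alpha (x + y) = alpha x + alpha y)
  (alpha_invol : forall x, alpha (alpha x) = x)
  (alpha_isom : forall x y, b (alpha x) (alpha y) = b x y)
  (hE1 : alpha E1 = R3) (hE2 : alpha E2 = R1) (hE3 : alpha E3 = R2)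
  (* alpha permutes the six A_2-configurations in three orbits *)
  (sigma : 'I_6 -> 'I_6)
  (sigma_invol : forall i, sigma (sigma i) = i)
  (sigma_nofix : forall i, sigma i != i)
  (hR : forall i, perm_eq [:: alpha (R i 0); alpha (R i 1)]
                          [:: R (sigma i) 0; R (sigma i) 1]) :
  alpha C1 = C1 \/ alpha C1 = - R3 - E1 + (E3 + R2) *+ 3 - C1.
Proof.
set rhs := - R3 - E1 + (E3 + R2) *+ 3 - C1.
(* All 49 intersection numbers, as hypotheses for lia. *)
have gram := @ord7_all _ (fun i => @ord7_all _ (hmat i)).
rewrite !mxE /tnth /= in gram.
have bE := (bBl b_addl, b_addl, bNl b_addl, bMnl b_addl).
have chain_perp i k : b E1 (R i k) = 0 /\ b E2 (R i k) = 0 /\ b E3 (R i k) = 0 /\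
    b R1 (R i k) = 0 /\ b R2 (R i k) = 0 /\ b R3 (R i k) = 0 /\ b C1 (R i k) = 0.
  by do !split; rewrite b_sym hdisj // !inE eqxx ?orbT.
pose W g := g \in [:: E1; E3; R1; R2; R3] \/ exists i k, g = R i k.
have W_perp z : b z E1 = 0 -> b z E3 = 0 -> b z R1 = 0 -> b z R2 = 0 ->
    b z R3 = 0 -> (forall i k, b z (R i k) = 0) -> orthogonal_to b W z.
  move=> ? ? ? ? ? zR g [|[i [k ->]]] //.
  by rewrite !inE => /orP[|/or4P[]] /eqP ->.
have W_eq0 z : orthogonal_to b W z -> b z C1 = 0 -> z = 0.
  move=> z_perp zC; apply: (orthogonal_generators_eq0 b_addl b_sym b_nondeg hspan).
    by move=> g; rewrite in_cons => /orP[/eqP -> // | g_in]; apply: z_perp; left.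
  by move=> i k; apply: z_perp; right; exists i, k.
have alpha_adj x y : b (alpha x) y = b x (alpha y).
  by rewrite -{1}(alpha_invol y) alpha_isom.
have [aR1 aR2 aR3] : [/\ alpha R1 = E2, alpha R2 = E3 & alpha R3 = E1].
  by rewrite -hE1 -hE2 -hE3 !alpha_invol.
have shift_perp : orthogonal_to b W (alpha C1 - C1).
  apply: W_perp; rewrite ?bE ?alpha_adj ?hE1 ?hE3 ?aR1 ?aR2 ?aR3; try lia.
  move=> i k; have := hR (sigma i); rewrite sigma_invol.
  move=> /(perm_eq_pair_preimage (x := R (sigma i)) (y := R i))/(_ k) [l Rik].
  rewrite (bBl b_addl) {1}Rik alpha_isom.
  by have := chain_perp i k; have := chain_perp (sigma i) l; lia.
have w_perp : orthogonal_to b W (rhs - C1).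
  apply: W_perp; rewrite /rhs ?bE; try lia.
  by move=> i k; have := chain_perp i k; rewrite !bE; lia.
have bwc : b (rhs - C1) C1 != 0 by apply/eqP; rewrite /rhs !bE; lia.
have bww : b (rhs - C1) (rhs - C1) = - 2 * b (rhs - C1) C1.
  by rewrite /rhs !bE !(b_sym _ (_ - C1)) !bE; lia.
have norm : b (C1 + (alpha C1 - C1)) (C1 + (alpha C1 - C1)) = b C1 C1.
  by rewrite subrKC alpha_isom.
have [v0|vw] := orthogonal_isometric_shift b_addl b_sym W_eq0 w_perp bwc bww shift_perp norm.
- by left; apply/eqP; rewrite -subr_eq0 v0.
- by right; apply: (addIr (- C1)).
Qed.
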